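(* Let $$A=\bigoplus_{i\in I}B(H_{\mathrm{in},i}),\quad B=\bigoplus_{j\in J}B(H_{\mathrm{out},j}),\quad C=\bigoplus_{k\in K}B(K_{\mathrm{in},k}),\quad D=\bigoplus_{l\in L}B(K_{\mathrm{out},l}),$$ and let $\mathcal S:\underline{\mathrm{Hom}}(A,B)\to\underline{\mathrm{Hom}}(C,D)$ be a deterministic supermap. Then there exists a unital completely positive map $\mathcal N:A\to C$ such that, for every positive $\rho\in C$ with $\mathrm{Tr}(\rho)=1$, $$\mathcal S_*(1_D\boxtimes\rho)=1_B\boxtimes\mathcal N_*(\rho).$$ Here $\mathcal S_*$ and $\mathcal N_*$ are the duals of $\mathcal S$ and $\mathcal N$.
   Context: Throughout, all Hilbert spaces are finite-dimensional and nonzero, and all index sets are finite and nonempty. **Multimatrix algebras.** A finite-dimensional $C^*$-algebra is written as $A=\bigoplus_{i\in I}B(H_i)$, with elements $X=(X_i)_{i\in I}$. Its trace is $\mathrm{Tr}(X)=\sum_i\mathrm{Tr}(X_i)$, and $X\ge 0$ means every block is positive semidefinite. **The algebra $\underline{\mathrm{Hom}}$ and (TP).** For $A=\bigoplus_{i\in I}B(H_i)$ and $B=\bigoplus_{j\in J}B(K_j)$, set $$\underline{\mathrm{Hom}}(A,B):=\bigoplus_{(j,i)\in J\times I}B(K_j\otimes H_i).$$ An element $X\in\underline{\mathrm{Hom}}(A,B)$ satisfies **(TP)** if $\sum_{j\in J}\mathrm{Tr}_{K_j}(X_{ji})=1_{H_i}$ for every $i\in I$. These positive (TP) elements are exactly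 the Choi operators of the channels (CPTP maps) $A\to B$. **Notation.** For $\rho=(\rho_i)_i\in A$, write $1_B\boxtimes\rho:=(1_{K_j}\otimes\rho_i)_{(j,i)}\in\underline{\mathrm{Hom}}(A,B)$. **Deterministic supermaps.** A deterministic supermap is a completely positive linear map $\mathcal S:\underline{\mathrm{Hom}}(A,B)\to\underline{\mathrm{Hom}}(C,D)$ sending every positive element satisfying (TP) to an element satisfying (TP). **Duals.** For a linear map $\Phi:\mathcal A\to\mathcal B$ between such algebras, the dual $\Phi_*:\mathcal B\to\mathcal A$ is the unique linear map with $$\mathrm{Tr}(\Phi_*(y)\,x)=\mathrm{Tr}(y\,\Phi(x))\quad\text{for all } x\in\mathcal A,\ y\in\mathcal B.$$ If $\Phi$ is CP then $\Phi_*$ is CP. A CP map $\Phi$ is unital iff $\Phi_*$ is trace-preserving. *)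

From HB Require Import structures.
From mathcomp Require Import all_boot all_order all_algebra.
From mathcomp Require Import algC.
From mathcomp Require Import mxtens.
Set Implicit Arguments. Unset Strict Implicit. Unset Printing Implicit Defensive.
Import Order.TTheory GRing.Theory Num.Theory.
Local Open Scope ring_scope.

(* Scalars: algC (algebraic complex numbers), a numClosedFieldType; its
   order  0 <= z  means "z is real and nonnegative".                        *)

(* Multimatrix algebra  A = (+)_{i in I} B(C^{d i}) : elements X = (X_i)_i *)
Definition alg (I : finType) (d : I -> nat) := forall i : I, 'M[algC]_(d i).

Section Ops.
Variables (I : finType) (d : I -> nat).
Definition addA (x y : alg d) : alg d := fun i => x i + y i.
Definition scaleA (a : algC) (x : alg d) : alg d := fun i => a *: x i.
Definition mulA (x y : alg d) : alg d := fun i => x i *m y i.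
Definition oneA : alg d := fun i => 1%:M.
Definition trA (x : alg d) : algC := \sum_i \tr (x i).
End Ops.

Definition psd n (M : 'M[algC]_n) : Prop :=
  forall v : 'cV[algC]_n, 0 <= ((map_mx Num.conj v)^T *m M *m v) 0 0.

Definition posA (I : finType) (d : I -> nat) (x : alg d) : Prop :=
  forall i, psd (x i).

(* Hilbert space tensor product K (x) H of dims m, n is C^(m*n) with the
   basis ordering mxtens_index (k, h); HomA(A,B)_(j,i) = B(K_j (x) H_i). *)
Definition homd (J I : finType) (dB : J -> nat) (dA : I -> nat) (p : J * I) : nat :=
  dB p.1 * dA p.2.

Definition HomA (I J : finType) (dA : I -> nat) (dB : J -> nat) :=
  alg (homd dB dA).

Definition ptrace1 m n (X : 'M[algC]_(m * n)) : 'M[algC]_n :=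
  \matrix_(a, b) \sum_(k < m) X (mxtens_index (k, a)) (mxtens_index (k, b)).

Definition TP (I J : finType) (dA : I -> nat) (dB : J -> nat)
  (X : HomA dA dB) : Prop :=
  forall i : I, \sum_(j : J) (ptrace1 (X (j, i) : 'M_(dB j * dA i)) : 'M_(dA i)) = 1%:M.

Definition boxt (I J : finType) (dA : I -> nat) (dB : J -> nat)
  (rho : alg dA) : HomA dA dB :=
  fun p => tensmx (1%:M : 'M[algC]_(dB p.1)) (rho p.2).

Definition linA (I J : finType) (dA : I -> nat) (dB : J -> nat)
  (f : alg dA -> alg dB) : Prop :=
  forall (a : algC) (x y : alg dA), f (addA (scaleA a x) y) = addA (scaleA a (f x)) (f y).

(* M_n(A) = (+)_i B(C^n (x) C^{d i}); block (a,b) of X in M_n(A) *)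
Definition blk (I : finType) (d : I -> nat) (n : nat)
  (X : alg (fun i => n * d i)) (a b : 'I_n) : alg d :=
  fun i => \matrix_(r, s) X i (mxtens_index (a, r)) (mxtens_index (b, s)).

(* amplification  id_{M_n} (x) f *)
Definition ampl (I J : finType) (dA : I -> nat) (dB : J -> nat)
  (f : alg dA -> alg dB) (n : nat) (X : alg (fun i => n * dA i)) :
  alg (fun j => n * dB j) :=
  fun j => \matrix_(u, v)
    f (blk X (mxtens_unindex u).1 (mxtens_unindex v).1) j
      (mxtens_unindex u).2 (mxtens_unindex v).2.

Definition CP (I J : finType) (dA : I -> nat) (dB : J -> nat)
  (f : alg dA -> alg dB) : Prop :=
  linA f /\ forall (n : nat) (X : alg (fun i => n * dA i)),
    posA X -> posA (ampl f X).

Definition unital (I J : finType) (dA : I -> nat) (dB : J -> nat)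
  (f : alg dA -> alg dB) : Prop := f (oneA dA) = oneA dB.

Definition det_supermap (I J K L : finType) (dA : I -> nat) (dB : J -> nat)
  (dC : K -> nat) (dD : L -> nat) (S : HomA dA dB -> HomA dC dD) : Prop :=
  CP S /\ forall X : HomA dA dB, posA X -> TP X -> TP (S X).

Definition is_dual (I J : finType) (dA : I -> nat) (dB : J -> nat)
  (f : alg dA -> alg dB) (g : alg dB -> alg dA) : Prop :=
  forall (x : alg dA) (y : alg dB), trA (mulA (g y) x) = trA (mulA y (f x)).

(* Take N := PTr o S o E, where E x := (1_B / dim B) [x] x and PTr is the partial
   trace over the outputs, so that PTr o E = id.  N is CP as a composite of CP maps,
   and unital because E 1 is a channel.  By duality, both sides of the claimed
   identity are determined by the functionals X |-> Tr(rho PTr(S X)) and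
   X |-> Tr(N_*(rho) PTr X) = Tr(rho PTr(S (E (PTr X)))), so it suffices that the
   linear functional phi X := Tr(rho PTr(S X)) kills every X with PTr X = 0.  Now phi
   is 1 on all channels, and E 1 is a positive multiple of the identity, so
   E 1 + s H is still a channel for every hermitian H with PTr H = 0 and small s > 0;
   hence phi H = 0, and a general X with PTr X = 0 is a combination of two such H. *)

From HB Require Import structures.
From mathcomp Require Import all_boot all_order all_algebra.
From mathcomp Require Import algC mxtens ring.
From Stdlib Require Import FunctionalExtensionality.
Set Implicit Arguments. Unset Strict Implicit. Unset Printing Implicit Defensive.
Import Order.TTheory GRing.Theory Num.Theory.
Local Open Scope ring_scope.

Lemma sumr_only (V : nmodType) (T : finType) (k : T) (F : T -> V) :
  (forall k', k' != k -> F k' = 0) -> \sum_k' F k' = F k.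
Proof. by move=> h; rewrite (bigD1 k) //= big1 ?addr0. Qed.
Arguments sumr_only {V T} k [F].

Lemma big_mxtens_index (V : nmodType) m n (F : 'I_(m * n) -> V) :
  \sum_u F u = \sum_a \sum_b F (mxtens_index (a, b)).
Proof.
rewrite pair_bigA /= (reindex (@mxtens_index m n)) /=; last first.
  by exists (@mxtens_unindex m n) => x _; rewrite (mxtens_indexK, mxtens_unindexK).
by apply: eq_bigr => -[a b].
Qed.

Lemma big_mxtens_index3 (V : nmodType) m n p (F : 'I_(m * (n * p)) -> V) :
  \sum_u F u = \sum_a \sum_k \sum_r F (mxtens_index (a, mxtens_index (k, r))).
Proof. by rewrite big_mxtens_index; apply: eq_bigr => a _; rewrite big_mxtens_index. Qed.

Lemma tensmx11 m n : (1%:M : 'M[algC]_m) *t (1%:M : 'M[algC]_n) = 1%:M.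
Proof.
apply/matrixP => u v.
case: (mxtens_indexP u) => a b; case: (mxtens_indexP v) => c d.
rewrite tensmxE !mxE (can_eq (@mxtens_indexK m n)) xpair_eqE.
by case: (a == c); case: (b == d); rewrite ?mulr1 ?mulr0.
Qed.

Lemma tensmx1D m n (c : algC) (x y : 'M[algC]_n) :
  (1%:M : 'M[algC]_m) *t (c *: x + y) = c *: (1%:M *t x) + 1%:M *t y.
Proof.
apply/matrixP => u v.
case: (mxtens_indexP u) => a b; case: (mxtens_indexP v) => a' b'.
by rewrite !mxE !mxtens_indexK /= mulrDr mulrCA.
Qed.

Section PartialTrace.
Variables m n : nat.
Implicit Types X Y : 'M[algC]_(m * n).

Lemma ptrace1D X Y : ptrace1 (X + Y) = ptrace1 X + ptrace1 Y.
Proof. by apply/matrixP => a b; rewrite !mxE -big_split; apply: eq_bigr => k _; rewrite mxE. Qed.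

Lemma ptrace1Z (c : algC) X : ptrace1 (c *: X) = c *: ptrace1 X.
Proof. by apply/matrixP => a b; rewrite !mxE mulr_sumr; apply: eq_bigr => k _; rewrite mxE. Qed.

Lemma ptrace1_tens (A : 'M[algC]_m) (B : 'M[algC]_n) : ptrace1 (A *t B) = \tr A *: B.
Proof.
apply/matrixP => a b; rewrite !mxE mulr_suml.
by apply: eq_bigr => k _; rewrite tensmxE.
Qed.

Lemma ptrace1_adj X : ptrace1 (map_mx Num.conj X)^T = (map_mx Num.conj (ptrace1 X))^T.
Proof. by apply/matrixP => a b; rewrite !mxE rmorph_sum; apply: eq_bigr => k _; rewrite !mxE. Qed.

Lemma mxtrace_tens1_mul (r : 'M[algC]_n) Y :
  \tr ((1%:M : 'M_m) *t r *m Y) = \tr (r *m ptrace1 Y).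
Proof.
rewrite /mxtrace big_mxtens_index.
under eq_bigr => k _ do under eq_bigr => a _ do rewrite mxE big_mxtens_index.
rewrite exchange_big /=; apply: eq_bigr => a _.
rewrite mxE.
under eq_bigr => k _.
  rewrite (sumr_only k); last first.
    move=> k' nk.
    by apply: big1 => b _; rewrite tensmxE mxE eq_sym (negbTE nk) !mul0r.
  under eq_bigr => b _ do rewrite tensmxE mxE eqxx mul1r.
  over.
rewrite exchange_big /=; apply: eq_bigr => b _.
by rewrite mxE mulr_sumr.
Qed.

End PartialTrace.

Section Multimatrix.
Variables (I : finType) (d : I -> nat).
Implicit Types x y : alg d.

Lemma trA_mul_linear y (a : algC) x z :
  trA (mulA y (addA (scaleA a x) z)) = a * trA (mulA y x) + trA (mulA y z).
Proof.
rewrite /trA mulr_sumr -big_split /=.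
by apply: eq_bigr => i _; rewrite /mulA /addA /scaleA mulmxDr -scalemxAr mxtraceD mxtraceZ.
Qed.

Lemma trA_mul1 y : trA (mulA y (oneA d)) = trA y.
Proof. by apply: eq_bigr => i _; rewrite /mulA mulmx1. Qed.

Definition unitA (p : I) (a b : 'I_(d p)) : alg d :=
  fun q => \matrix_(r, s) (((q == p) && (val s == val a) && (val r == val b))%:R : algC).

Lemma trA_mul_unitA y p (a b : 'I_(d p)) : trA (mulA y (unitA a b)) = y p a b.
Proof.
rewrite /trA (sumr_only p) => [|q nq]; last first.
  rewrite /mxtrace big1 // => r _; rewrite mxE big1 // => s _.
  by rewrite mxE (negbTE nq) mulr0.
rewrite /mxtrace (sumr_only a) => [|r nr]; last first.
  by rewrite mxE big1 // => s _; rewrite mxE eqxx !val_eqE (negbTE nr) mulr0.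
rewrite mxE (sumr_only b) => [|s ns]; last first.
  by rewrite mxE eqxx !val_eqE (negbTE ns) andbF mulr0.
by rewrite mxE eqxx !val_eqE !eqxx mulr1.
Qed.

Lemma trA_mul_inj y y' : (forall x, trA (mulA y x) = trA (mulA y' x)) -> forall p, y p = y' p.
Proof.
move=> h p; apply/matrixP => a b.
by rewrite -(trA_mul_unitA y a b) -(trA_mul_unitA y' a b) h.
Qed.

Definition adjA x : alg d := fun p => (map_mx Num.conj (x p))^T.

End Multimatrix.

Section PartialTraceHom.
Variables (I J : finType) (dA : I -> nat) (dB : J -> nat).
Implicit Types X Y : HomA dA dB.

Definition PTr X : alg dA :=
  fun i => \sum_j (ptrace1 (X (j, i) : 'M_(dB j * dA i)) : 'M_(dA i)).

Lemma TPE X : TP X <-> forall i, PTr X i = 1%:M.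
Proof. by []. Qed.

Lemma PTr_linear (a : algC) X Y :
  PTr (addA (scaleA a X) Y) = addA (scaleA a (PTr X)) (PTr Y).
Proof.
apply: functional_extensionality_dep => i.
rewrite /PTr /addA /scaleA scaler_sumr -big_split /=.
by apply: eq_bigr => j _; rewrite ptrace1D ptrace1Z.
Qed.

Lemma PTrZ (a : algC) X : PTr (scaleA a X) = scaleA a (PTr X).
Proof.
apply: functional_extensionality_dep => i.
by rewrite /PTr /scaleA scaler_sumr; apply: eq_bigr => j _; rewrite ptrace1Z.
Qed.

Lemma PTr_adj X : PTr (adjA X) = adjA (PTr X).
Proof.
apply: functional_extensionality_dep => i; rewrite /PTr /adjA.
under eq_bigr => j _ do rewrite ptrace1_adj.
by rewrite -linear_sum -map_mx_sum.
Qed.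

Lemma trA_mul_boxt (s : alg dA) X : trA (mulA (boxt dB s) X) = trA (mulA s (PTr X)).
Proof.
rewrite /trA; transitivity (\sum_(p : J * I) \tr (boxt dB s (p.1, p.2) *m X (p.1, p.2))).
  by apply: eq_bigr => -[].
rewrite -(pair_bigA _ (fun j i => \tr (boxt dB s (j, i) *m X (j, i)))) exchange_big /=.
apply: eq_bigr => i _; rewrite /mulA /PTr mulmx_sumr raddf_sum.
by apply: eq_bigr => j _; apply: mxtrace_tens1_mul.
Qed.

Definition invdim : algC := (\sum_j (dB j)%:R)^-1.

Lemma invdim_ge0 : 0 <= invdim.
Proof. by rewrite invr_ge0 sumr_ge0 // => j _; rewrite ler0n. Qed.

Definition mixed_boxt (x : alg dA) : HomA dA dB := scaleA invdim (boxt dB x).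

Lemma mixed_boxt_linear (a : algC) (x y : alg dA) :
  mixed_boxt (addA (scaleA a x) y) = addA (scaleA a (mixed_boxt x)) (mixed_boxt y).
Proof.
apply: functional_extensionality_dep => p.
by rewrite /mixed_boxt /scaleA /addA /boxt tensmx1D scalerDr !scalerA mulrC.
Qed.

Lemma mixed_boxt1E p : mixed_boxt (oneA dA) p = invdim%:M.
Proof. by rewrite /mixed_boxt /scaleA /boxt tensmx11 scalemx1. Qed.

Hypotheses (hJ : (0 < #|J|)%N) (hdB : forall j, (0 < dB j)%N).

Lemma sum_dim_gt0 : 0 < \sum_j ((dB j)%:R : algC).
Proof.
have [j0 _] := card_gt0P hJ.
by rewrite (bigD1 j0) //= ltr_wpDr ?sumr_ge0 // ?ltr0n.
Qed.

Lemma invdim_gt0 : 0 < invdim.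
Proof. by rewrite invr_gt0 sum_dim_gt0. Qed.

Lemma PTr_mixed_boxt x : PTr (mixed_boxt x) = x.
Proof.
apply: functional_extensionality_dep => i; rewrite /PTr /mixed_boxt /scaleA /boxt /=.
under eq_bigr => j _ do rewrite ptrace1Z ptrace1_tens mxtrace1 scalerA.
by rewrite -scaler_suml -mulr_sumr mulVf ?scale1r // gt_eqF // sum_dim_gt0.
Qed.

Lemma TP_mixed_boxt1 : TP (mixed_boxt (oneA dA)).
Proof. by apply/TPE => i; rewrite PTr_mixed_boxt. Qed.

End PartialTraceHom.

Section QuadraticForm.
Variable n : nat.
Implicit Types (M H : 'M[algC]_n) (v : 'cV[algC]_n).

Definition qform M v : algC := ((map_mx Num.conj v)^T *m M *m v) 0 0.

Lemma psdE M : psd M <-> forall v, 0 <= qform M v.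
Proof. by []. Qed.

Lemma qformE M v : qform M v = \sum_a \sum_b (v a 0)^* * M a b * v b 0.
Proof.
rewrite /qform mxE exchange_big /=; apply: eq_bigr => a _.
by rewrite mxE mulr_suml; apply: eq_bigr => b _; rewrite !mxE.
Qed.

Lemma qform_sum (T : finType) (F : T -> 'M[algC]_n) v :
  qform (\sum_t F t) v = \sum_t qform (F t) v.
Proof. by rewrite /qform mulmx_sumr mulmx_suml summxE. Qed.

Lemma qform_linear (s c : algC) M v :
  qform (s *: M + c%:M) v = s * qform M v + c * \sum_a `|v a 0| ^+ 2.
Proof.
rewrite /qform mulmxDr mulmxDl -scalemxAr -scalemxAl mul_mx_scalar -scalemxAl.
rewrite !mxE; congr (_ + c * _); apply: eq_bigr => a _.
by rewrite !mxE normCK mulrC.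
Qed.

Lemma qform_herm_real H v : (forall a b, (H b a)^* = H a b) -> qform H v \is Num.real.
Proof.
move=> hH; apply/CrealP; rewrite qformE rmorph_sum [RHS]exchange_big /=.
apply: eq_bigr => a _; rewrite rmorph_sum; apply: eq_bigr => b _.
by rewrite !rmorphM /= conjCK hH; ring.
Qed.

Lemma norm_qform_le M v :
  `|qform M v| <= (\sum_a \sum_b `|M a b|) * \sum_a `|v a 0| ^+ 2.
Proof.
set q := \sum_a `|v a 0| ^+ 2.
have hvv a b : `|v a 0| * `|v b 0| <= q.
  have sq_le c : `|v c 0| ^+ 2 <= q.
    by rewrite /q (bigD1 c) //= lerDl sumr_ge0 // => e _; rewrite exprn_ge0.
  have [le_ab|le_ba] := real_leP (normr_real (v a 0)) (normr_real (v b 0)).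
  - by apply: le_trans (sq_le b); rewrite expr2 ler_wpM2r.
  - by apply: le_trans (sq_le a); rewrite expr2 ler_wpM2l // ltW.
rewrite qformE mulr_suml; apply: le_trans (ler_norm_sum _ _ _) _.
apply: ler_sum => a _; rewrite mulr_suml; apply: le_trans (ler_norm_sum _ _ _) _.
apply: ler_sum => b _.
by rewrite !normrM norm_conjC mulrAC mulrC ler_wpM2l.
Qed.

Lemma psd_herm_add_scalar (s c m : algC) H :
  0 <= s -> s * m <= c -> (forall a b, (H b a)^* = H a b) ->
  \sum_a \sum_b `|H a b| <= m -> psd (s *: H + c%:M).
Proof.
move=> hs hsm hH hm; apply/psdE => v; rewrite qform_linear.
set q := \sum_a `|v a 0| ^+ 2.
have hq : 0 <= q by rewrite sumr_ge0 // => a _; rewrite exprn_ge0.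
have hz : - (s * qform H v) <= s * m * q.
  rewrite -mulrN -mulrA ler_wpM2l //.
  apply: (@le_trans _ _ `|qform H v|).
    by rewrite -normrN real_ler_norm // rpredN qform_herm_real.
  by apply: le_trans (norm_qform_le H v) _; rewrite ler_wpM2r.
rewrite -[s * _]opprK addrC subr_ge0; apply: le_trans hz _.
by rewrite ler_wpM2r.
Qed.

Lemma psd_scalar (c : algC) : 0 <= c -> psd (c%:M : 'M_n).
Proof.
move=> hc; apply/psdE => v; have := qform_linear 0 c 0 v.
rewrite scale0r add0r mul0r add0r => ->.
by rewrite mulr_ge0 // sumr_ge0 // => a _; rewrite exprn_ge0.
Qed.

End QuadraticForm.

Lemma posA_mixed_boxt1 (I J : finType) (dA : I -> nat) (dB : J -> nat) :
  posA (mixed_boxt dB (oneA dA)).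
Proof. by move=> p; rewrite mixed_boxt1E; apply/psd_scalar/invdim_ge0. Qed.

Section Amplification.
Variables (I J K : finType) (dA : I -> nat) (dB : J -> nat) (dC : K -> nat).

Lemma blk_ampl (f : alg dA -> alg dB) n (X : alg (fun i => n * dA i)) a b :
  blk (ampl f X) a b = f (blk X a b).
Proof.
apply: functional_extensionality_dep => j; apply/matrixP => r s.
by rewrite !mxE !mxtens_indexK.
Qed.

Lemma ampl_comp (f : alg dA -> alg dB) (h : alg dB -> alg dC) n (X : alg (fun i => n * dA i)) :
  ampl h (ampl f X) = ampl (fun x => h (f x)) X.
Proof.
apply: functional_extensionality_dep => k; apply/matrixP => u v.
by rewrite !mxE blk_ampl.
Qed.

Lemma CP_comp (f : alg dA -> alg dB) (h : alg dB -> alg dC) :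
  CP f -> CP h -> CP (fun x => h (f x)).
Proof.
move=> [lf pf] [lh ph]; split; first by move=> a x y; rewrite lf lh.
by move=> n X hX; rewrite -ampl_comp; apply/ph/pf.
Qed.

End Amplification.

Section PositivityOfAmplifications.
Variables (I J : finType) (dA : I -> nat) (dB : J -> nat).

Lemma CP_mixed_boxt : CP (mixed_boxt (dA := dA) dB).
Proof.
split=> [a x y|n X hX [j i]]; first exact: mixed_boxt_linear.
apply/psdE => w; pose y k := \col_(t < n * dA i)
  w (mxtens_index ((mxtens_unindex t).1, mxtens_index (k, (mxtens_unindex t).2))) 0.
have entryE a k r b k' s :
  ampl (mixed_boxt dB) X (j, i) (mxtens_index (a, mxtens_index (k, r)))
    (mxtens_index (b, mxtens_index (k', s))) =
  invdim dB * ((k == k')%:R * X i (mxtens_index (a, r)) (mxtens_index (b, s))).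
  by rewrite mxE !mxtens_indexK /= /mixed_boxt /scaleA mxE tensmxE /blk !mxE.
suff -> : qform (ampl (mixed_boxt dB) X (j, i)) w = invdim dB * \sum_k qform (X i) (y k).
  by rewrite mulr_ge0 ?invdim_ge0 // sumr_ge0 // => k _; apply: hX.
rewrite qformE big_mxtens_index3 exchange_big mulr_sumr; apply: eq_bigr => k _.
rewrite qformE big_mxtens_index mulr_sumr; apply: eq_bigr => a _.
rewrite mulr_sumr; apply: eq_bigr => r _.
rewrite big_mxtens_index3 big_mxtens_index mulr_sumr; apply: eq_bigr => b _.
rewrite (sumr_only k) => [|k' nk]; last first.
  by apply: big1 => s _; rewrite entryE eq_sym (negbTE nk) mul0r mulr0 mulr0 mul0r.
rewrite mulr_sumr; apply: eq_bigr => s _.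
rewrite entryE eqxx /y !mxE !mxtens_indexK /= mul1r; ring.
Qed.

(* Block [(j, m)] of the partial trace is a compression of [Y (j, i)] to the slice [k = m]. *)
Lemma CP_PTr : CP (PTr (dA := dA) (dB := dB)).
Proof.
split=> [a X Y|n Y hY i]; first exact: PTr_linear.
pose slice j (m : 'I_(dB j)) : 'M[algC]_(n * dA i) := \matrix_(u, v)
  Y (j, i) (mxtens_index ((mxtens_unindex u).1, mxtens_index (m, (mxtens_unindex u).2)))
           (mxtens_index ((mxtens_unindex v).1, mxtens_index (m, (mxtens_unindex v).2))).
have -> : ampl (PTr (dB := dB)) Y i = \sum_j \sum_m slice j m.
  apply/matrixP => u v; rewrite mxE /PTr !summxE; apply: eq_bigr => j _.
  by rewrite summxE mxE; apply: eq_bigr => m _; rewrite /blk !mxE.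
apply/psdE => w; rewrite qform_sum sumr_ge0 // => j _; rewrite qform_sum sumr_ge0 // => m _.
pose y := \col_(t < n * (dB j * dA i))
  ((((mxtens_unindex (mxtens_unindex t).2).1 == m)%:R) *
   w (mxtens_index ((mxtens_unindex t).1, (mxtens_unindex (mxtens_unindex t).2).2)) 0).
suff -> : qform (slice j m) w = qform (Y (j, i)) y by apply: hY.
rewrite !qformE big_mxtens_index big_mxtens_index3; apply: eq_bigr => a _.
rewrite (sumr_only m) => [|m' nm]; last first.
  apply: big1 => r _; rewrite big_mxtens_index3; apply: big1 => b _; apply: big1 => m'' _.
  by apply: big1 => s _; rewrite /y !mxE !mxtens_indexK /= (negbTE nm) mul0r rmorph0 !mul0r.
apply: eq_bigr => r _; rewrite big_mxtens_index big_mxtens_index3; apply: eq_bigr => b _.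
rewrite (sumr_only m) => [|m' nm]; last first.
  by apply: big1 => s _; rewrite /y !mxE !mxtens_indexK /= (negbTE nm) mul0r mulr0.
by apply: eq_bigr => s _; rewrite /y /slice !mxE !mxtens_indexK /= eqxx !mul1r.
Qed.

End PositivityOfAmplifications.

Section ChannelFunctional.
Variables (I J : finType) (dA : I -> nat) (dB : J -> nat).
Variable phi : HomA dA dB -> algC.
Hypothesis phi_linear : forall a X Y, phi (addA (scaleA a X) Y) = a * phi X + phi Y.
Hypothesis phi_channel : forall X, posA X -> TP X -> phi X = 1.
Hypotheses (hJ : (0 < #|J|)%N) (hdB : forall j, (0 < dB j)%N).

Lemma phiZ a X : phi (scaleA a X) = a * phi X.
Proof.
pose zero : HomA dA dB := fun p => 0.
have addA_zero Y : addA Y zero = Y.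
  by apply: functional_extensionality_dep => p; rewrite /addA addr0.
have phi_zero : phi zero = 0.
  rewrite (_ : zero = addA (scaleA (-1) X) X) ?phi_linear ?mulN1r ?addNr //.
  by apply: functional_extensionality_dep => p; rewrite /addA /scaleA scaleN1r addNr.
by rewrite -[scaleA a X]addA_zero phi_linear phi_zero addr0.
Qed.

Lemma phi_herm_PTr0 (H : HomA dA dB) : (forall p a b, (H p b a)^* = H p a b) ->
  (forall i, PTr H i = 0) -> phi H = 0.
Proof.
move=> hH hP.
set X0 := mixed_boxt dB (oneA dA).
set m := \sum_p \sum_a \sum_b `|H p a b|.
have m_ge0 : 0 <= m.
  by rewrite sumr_ge0 // => p _; rewrite sumr_ge0 // => a _; rewrite sumr_ge0.
set s := invdim dB / (m + 1).
have s_gt0 : 0 < s by rewrite divr_gt0 ?invdim_gt0 // ltr_wpDl.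
have phiX0 : phi X0 = 1 by apply: phi_channel; [apply: posA_mixed_boxt1 | apply: TP_mixed_boxt1].
have phiXs : phi (addA (scaleA s H) X0) = 1.
  apply: phi_channel => [p|]; last first.
    by apply/TPE => i; rewrite PTr_linear PTr_mixed_boxt // /addA /scaleA hP scaler0 add0r.
  rewrite /addA /scaleA /X0 mixed_boxt1E; apply: (psd_herm_add_scalar (m := m)) => //.
  - by rewrite ltW.
  - apply: (@le_trans _ _ (s * (m + 1))); first by rewrite ler_wpM2l ?(ltW s_gt0) ?lerDl.
    by rewrite /s divfK // gt_eqF // ltr_wpDl.
  - rewrite /m (bigD1 p) //= lerDl sumr_ge0 // => q _.
    by rewrite sumr_ge0 // => a _; rewrite sumr_ge0.
move: phiXs; rewrite phi_linear phiX0 => /(canRL (addrK 1)); rewrite subrr => /eqP.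
by rewrite mulf_eq0 gt_eqF //= => /eqP.
Qed.

Lemma phi_PTr0 (Z : HomA dA dB) : (forall i, PTr Z i = 0) -> phi Z = 0.
Proof.
move=> hZ; set Zs := adjA Z.
have hZs i : PTr Zs i = 0 by rewrite /Zs PTr_adj /adjA hZ map_mx0 trmx0.
have phi_re : phi Z + phi Zs = 0.
  rewrite -[phi Z]mul1r -phi_linear; apply: phi_herm_PTr0 => [p a b|i].
    by rewrite /addA /scaleA !mxE rmorphD /= rmorphM /= conjC1 !mul1r conjCK addrC.
  by rewrite PTr_linear /addA /scaleA hZ hZs scaler0 addr0.
have phi_im : 'i * phi Z - 'i * phi Zs = 0.
  rewrite -mulNr -[_ * phi Zs]phiZ -phi_linear; apply: phi_herm_PTr0 => [p a b|i].
    by rewrite /addA /scaleA !mxE rmorphD /= !rmorphM /= conjCi raddfN /= conjCi opprK conjCK addrC.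
  by rewrite PTr_linear PTrZ /addA /scaleA hZ hZs !scaler0 addr0.
have : (2 * 'i) * phi Z = 0.
  transitivity ('i * (phi Z + phi Zs) + ('i * phi Z - 'i * phi Zs)); first by ring.
  by rewrite phi_re phi_im mulr0 addr0.
by move/eqP; rewrite !mulf_eq0 pnatr_eq0 (negbTE (neq0Ci _)) /= => /eqP.
Qed.

Lemma phi_PTr (X : HomA dA dB) : phi X = phi (mixed_boxt dB (PTr X)).
Proof.
apply/eqP; rewrite -subr_eq0 addrC -mulN1r -phi_linear; apply/eqP/phi_PTr0 => i.
by rewrite PTr_linear PTr_mixed_boxt // /addA /scaleA scaleN1r addNr.
Qed.

End ChannelFunctional.

Theorem lemma3p3
  (I J K L : finType)
  (dAin : I -> nat) (dBout : J -> nat) (dCin : K -> nat) (dDout : L -> nat)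
  (hI : (0 < #|I|)%N) (hJ : (0 < #|J|)%N) (hK : (0 < #|K|)%N) (hL : (0 < #|L|)%N)
  (hdA : forall i, (0 < dAin i)%N) (hdB : forall j, (0 < dBout j)%N)
  (hdC : forall k, (0 < dCin k)%N) (hdD : forall l, (0 < dDout l)%N)
  (S : HomA dAin dBout -> HomA dCin dDout)
  (hS : det_supermap S) :
  exists N : alg dAin -> alg dCin,
    CP N /\ unital N /\
    forall (S_ : HomA dCin dDout -> HomA dAin dBout) (N_ : alg dCin -> alg dAin),
      is_dual S S_ -> is_dual N N_ ->
      forall rho : alg dCin, posA rho -> trA rho = 1 ->
        forall p : J * I,
          S_ (boxt dDout rho) p = boxt dBout (N_ rho) p.
Proof.
have [S_CP S_TP] := hS; have [S_linear _] := S_CP.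
exists (fun x => PTr (dB := dDout) (S (mixed_boxt dBout x))); split.
  exact: CP_comp (CP_comp (CP_mixed_boxt _ _) S_CP) (CP_PTr _ _).
split.
  apply: functional_extensionality_dep => k.
  by apply: S_TP; [apply: posA_mixed_boxt1 | apply: TP_mixed_boxt1].
move=> S_ N_ S_dual N_dual rho _ tr_rho p; apply: trA_mul_inj => X.
rewrite S_dual !trA_mul_boxt N_dual.
pose phi Y := trA (mulA rho (PTr (dB := dDout) (S Y))).
apply: (phi_PTr (phi := phi)) => // [a Y Z|Y posY TPY].
  by rewrite /phi S_linear PTr_linear trA_mul_linear.
rewrite /phi; have -> : PTr (S Y) = oneA dCin by apply: functional_extensionality_dep; apply: S_TP.
by rewrite trA_mul1.
Qed.
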